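(* Let $(X,d)$ be a quasi-tree which is $\delta$-hyperbolic and has bottleneck constant $\Delta\geqslant 0$. Let $x_0\in X$, let $Z\subset X$ be any subset, and let $Y=\bigcup_{z\in Z}[x_0,z]$ be a union of geodesic segments (one chosen geodesic from $x_0$ to each $z\in Z$). Then there exist an $\mathbb{R}$-tree $(T,d^* )$ and a map $f:Y\to T$ such that: (1) for all $z\in Z$, the restriction of $f$ to the geodesic segment $[x_0,z]$ is an isometry; (2) for all $x,y\in Y$, $d(x,y)-2(\Delta+2\delta)\leqslant d^*(f(x),f(y))\leqslant d(x,y)$.
   Context: A quasi-tree is a geodesic metric space quasi-isometric to a simplicial tree. A geodesic metric space is $\delta$-hyperbolic if every geodesic triangle is $\delta$-slim: each point of one side lies within distance $\delta$ of the union of the other two sides. A bottleneck constant of $X$ is a number $\Delta\geqslant0$ such that for every geodesic $[x,y]$ in $X$ and every point $z\in[x,y]$, every path from $x$ to $y$ meets the closed ball $B(z,\Delta)$ (for a quasi-tree such $\Delta$ exists). An $\mathbb{R}$-tree is a metric space in which any two points are joined by a unique topological arc, which is a geodesic. *)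

From Stdlib Require Import Reals Lra.
Open Scope R_scope.

Definition is_metric {X : Type} (d : X -> X -> R) : Prop :=
  (forall x y, 0 <= d x y) /\
  (forall x y, d x y = 0 <-> x = y) /\
  (forall x y, d x y = d y x) /\
  (forall x y z, d x z <= d x y + d y z).

Definition is_geodesic {X : Type} (d : X -> X -> R) (g : R -> X) (x y : X) : Prop :=
  g 0 = x /\ g (d x y) = y /\
  (forall s t, 0 <= s <= d x y -> 0 <= t <= d x y -> d (g s) (g t) = Rabs (s - t)).

Definition on_geod {X : Type} (d : X -> X -> R) (g : R -> X) (x y p : X) : Prop :=
  exists t, 0 <= t <= d x y /\ p = g t.

Definition geodesic_space {X : Type} (d : X -> X -> R) : Prop :=
  is_metric d /\ forall x y, exists g, is_geodesic d g x y.

Definition hyperbolic {X : Type} (d : X -> X -> R) (delta : R) : Prop :=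
  forall (a b c : X) (g1 g2 g3 : R -> X),
    is_geodesic d g1 a b -> is_geodesic d g2 b c -> is_geodesic d g3 c a ->
    forall p, on_geod d g1 a b p ->
      exists q, (on_geod d g2 b c q \/ on_geod d g3 c a q) /\ d p q <= delta.

Definition path_continuous {X : Type} (d : X -> X -> R) (p : R -> X) : Prop :=
  forall t, 0 <= t <= 1 -> forall eps, 0 < eps -> exists eta, 0 < eta /\
    forall s, 0 <= s <= 1 -> Rabs (s - t) < eta -> d (p s) (p t) < eps.

Definition bottleneck {X : Type} (d : X -> X -> R) (Delta : R) : Prop :=
  0 <= Delta /\
  forall (x y : X) (g : R -> X), is_geodesic d g x y ->
    forall z, on_geod d g x y z ->
      forall p : R -> X, path_continuous d p -> p 0 = x -> p 1 = y ->
        exists t, 0 <= t <= 1 /\ d (p t) z <= Delta.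

Definition walk {V : Type} (adj : V -> V -> Prop) (w : nat -> V) (u v : V) (n : nat) : Prop :=
  w 0%nat = u /\ w n = v /\ (forall i, (i < n)%nat -> adj (w i) (w (S i))).

Definition nonbacktracking {V : Type} (w : nat -> V) (n : nat) : Prop :=
  forall i, (i + 2 <= n)%nat -> w i <> w (i + 2)%nat.

Definition simplicial_tree {V : Type} (adj : V -> V -> Prop) : Prop :=
  (forall u v, adj u v -> adj v u) /\
  (forall u, ~ adj u u) /\
  (forall u v, exists w n, walk adj w u v n) /\
  (forall u w n, (1 <= n)%nat -> walk adj w u u n -> nonbacktracking w n -> False).

Definition gdist {V : Type} (adj : V -> V -> Prop) (u v : V) (n : nat) : Prop :=
  (exists w, walk adj w u v n) /\ (forall w m, walk adj w u v m -> (n <= m)%nat).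

Definition quasi_isometric_to_tree {X V : Type} (d : X -> X -> R) (adj : V -> V -> Prop) : Prop :=
  exists (phi : X -> V) (lam C : R), 1 <= lam /\ 0 <= C /\
    (forall x y n, gdist adj (phi x) (phi y) n ->
        d x y / lam - C <= INR n <= lam * d x y + C) /\
    (forall v, exists x n, gdist adj v (phi x) n /\ INR n <= C).

Definition quasi_tree {X : Type} (d : X -> X -> R) : Prop :=
  geodesic_space d /\
  exists (V : Type) (adj : V -> V -> Prop), simplicial_tree adj /\ quasi_isometric_to_tree d adj.

Definition is_arc {T : Type} (d : T -> T -> R) (p : R -> T) (a b : T) : Prop :=
  path_continuous d p /\ p 0 = a /\ p 1 = b /\
  (forall s t, 0 <= s <= 1 -> 0 <= t <= 1 -> p s = p t -> s = t).

Definition R_tree {T : Type} (d : T -> T -> R) : Prop :=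
  is_metric d /\
  forall a b : T, exists g, is_geodesic d g a b /\
    forall p, is_arc d p a b ->
      forall q, (exists s, 0 <= s <= 1 /\ q = p s) <-> on_geod d g a b q.

(* The geodesics [x0, z] are glued into an R-tree along their common initial parts.  Call the
   geodesics to [z] and [z'] linked at height [u] if their points at distance [u] from [x0] can be
   joined by a path avoiding the open ball B(x0, u), and let the overlap c(z, z') be the supremum of
   such [u].  Concatenating paths gives min (c(z, z'), c(z', z'')) <= c(z, z''), so gluing the
   segments [0, d(x0, z)] along their initial pieces [0, c(z, z')] yields an R-tree, in which the
   points at heights [s], [s'] of the branches [z], [z'] are at distance s + s' - 2 min (s, s', c(z, z')).
   A geodesic of X between the corresponding points avoids B(x0, (s + s' - d) / 2), so this is at
   most their distance d.  Conversely, if the geodesics are linked at height [u], the connecting path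
   passes within Delta of the point of [γz(u), γz'(u)] closest to [x0], which by delta-hyperbolicity
   is at distance at most u - d(γz(u), γz'(u)) / 2 + 2 delta from [x0]; since the path stays outside
   B(x0, u), this gives d(γz(u), γz'(u)) <= 2 Delta + 4 delta, whence the lower bound. *)

From Stdlib Require Import Reals Lra Classical ClassicalEpsilon.
From Stdlib Require Import FunctionalExtensionality PropExtensionality ProofIrrelevance.
Open Scope R_scope.

Lemma le_of_forall_lt (m c : R) : 0 <= c -> (forall u, 0 <= u < m -> u <= c) -> m <= c.
Proof.
  intros Hc H. apply Rnot_lt_le. intros Hlt.
  assert ((c + m) / 2 <= c) by (apply H; lra). lra.
Qed.

Section Paths.
Context {X : Type} (d : X -> X -> R).

Lemma path_rev_continuous (p : R -> X) :
  path_continuous d p -> path_continuous d (fun t => p (1 - t)).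
Proof.
  intros Hc t Ht e He. destruct (Hc (1 - t) ltac:(lra) e He) as [eta [Heta H]].
  exists eta. split; auto. intros s Hs Hst. apply H; [lra|].
  replace (1 - s - (1 - t)) with (- (s - t)) by lra. rewrite Rabs_Ropp. auto.
Qed.

Lemma lipschitz_path_continuous (p : R -> X) (K : R) : 0 <= K ->
  (forall s t, 0 <= s <= 1 -> 0 <= t <= 1 -> d (p s) (p t) <= K * Rabs (s - t)) ->
  path_continuous d p.
Proof.
  intros HK Hp t Ht e He. exists (e / (K + 1)). split.
  { apply Rdiv_lt_0_compat; lra. }
  intros s Hs Hst. eapply Rle_lt_trans; [apply Hp; auto|].
  apply (Rmult_lt_compat_r (K + 1)) in Hst; [|lra].
  unfold Rdiv in Hst. rewrite Rmult_assoc, Rinv_l, Rmult_1_r in Hst by lra.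
  pose proof (Rabs_pos (s - t)). nra.
Qed.

Definition concat (p q : R -> X) : R -> X :=
  fun t => if Rle_dec t (1/2) then p (2 * t) else q (2 * t - 1).

Lemma concat_0 p q : concat p q 0 = p 0.
Proof. unfold concat. destruct Rle_dec; [|lra]. f_equal; lra. Qed.

Lemma concat_1 p q : concat p q 1 = q 1.
Proof. unfold concat. destruct Rle_dec; [lra|]. f_equal; lra. Qed.

Lemma concat_forall (P : X -> Prop) p q :
  (forall t, 0 <= t <= 1 -> P (p t)) -> (forall t, 0 <= t <= 1 -> P (q t)) ->
  forall t, 0 <= t <= 1 -> P (concat p q t).
Proof. intros Hp Hq t Ht. unfold concat. destruct Rle_dec; [apply Hp|apply Hq]; lra. Qed.

Lemma concat_continuous p q : path_continuous d p -> path_continuous d q -> p 1 = q 0 ->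
  path_continuous d (concat p q).
Proof.
  intros Hp Hq E t Ht e He. unfold concat.
  destruct (Rtotal_order t (1/2)) as [Hlt|[->|Hgt]].
  - destruct (Hp (2 * t) ltac:(lra) e He) as [eta [Heta H]].
    exists (Rmin (eta / 2) (1/2 - t)). split; [apply Rmin_glb_lt; lra|].
    intros s Hs Hst. pose proof (Rmin_l (eta/2) (1/2 - t)). pose proof (Rmin_r (eta/2) (1/2 - t)).
    apply Rabs_def2 in Hst.
    do 2 (destruct Rle_dec; [|lra]). apply H; [lra|]. apply Rabs_def1; lra.
  - destruct (Hp 1 ltac:(lra) e He) as [eta1 [Heta1 H1]].
    destruct (Hq 0 ltac:(lra) e He) as [eta2 [Heta2 H2]].
    exists (Rmin (eta1 / 2) (eta2 / 2)). split; [apply Rmin_glb_lt; lra|].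
    intros s Hs Hst. pose proof (Rmin_l (eta1/2) (eta2/2)). pose proof (Rmin_r (eta1/2) (eta2/2)).
    apply Rabs_def2 in Hst.
    destruct (Rle_dec (1/2) (1/2)); [|lra]. replace (2 * (1/2)) with 1 by lra.
    destruct Rle_dec.
    + apply H1; [lra|]. apply Rabs_def1; lra.
    + rewrite E. apply H2; [lra|]. apply Rabs_def1; lra.
  - destruct (Hq (2 * t - 1) ltac:(lra) e He) as [eta [Heta H]].
    exists (Rmin (eta / 2) (t - 1/2)). split; [apply Rmin_glb_lt; lra|].
    intros s Hs Hst. pose proof (Rmin_l (eta/2) (t - 1/2)). pose proof (Rmin_r (eta/2) (t - 1/2)).
    apply Rabs_def2 in Hst.
    do 2 (destruct Rle_dec; [lra|]). apply H; [lra|]. apply Rabs_def1; lra.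
Qed.

Hypothesis d_sym : forall x y, d x y = d y x.

(* The conditions on [W] say that [W] is open and that its boundary is contained in [{Q}]. *)
Lemma path_enters_through (p : R -> X) (W : X -> Prop) (Q : X) :
  path_continuous d p ->
  (forall y, W y -> exists e, 0 < e /\ forall z, d y z < e -> W z) ->
  (forall y, (forall e, 0 < e -> exists w, W w /\ d y w < e) -> W y \/ y = Q) ->
  ~ W (p 0) -> forall tau, 0 <= tau <= 1 -> W (p tau) ->
  exists s, 0 <= s < tau /\ p s = Q.
Proof.
  intros Hc Hop Hcl H0 tau Htau Hw.
  set (S := fun s => 0 <= s <= tau /\ ~ W (p s)).
  assert (Hb : bound S) by (exists tau; intros s [Hs _]; lra).
  assert (HS0 : S 0) by (split; [lra|auto]).
  destruct (completeness S Hb (ex_intro _ 0 HS0)) as [s0 [Hub Hlub]].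
  assert (Hs0 : 0 <= s0) by (apply Hub; split; [lra|auto]).
  assert (Hs1 : s0 <= tau) by (apply Hlub; intros s [Hs _]; lra).
  assert (Hafter : forall r, s0 < r <= tau -> W (p r)).
  { intros r Hr. apply NNPP. intros Hnw.
    assert (r <= s0) by (apply Hub; split; [lra|auto]). lra. }
  assert (Hnw : ~ W (p s0)).
  { intros Hw0. destruct (Hop _ Hw0) as [e [He He2]].
    destruct (Hc s0 ltac:(lra) e He) as [eta [Heta Heta2]].
    destruct (classic (exists s, S s /\ s > s0 - eta / 2)) as [[s [[Hs Hsn] Hs2]]|Hno].
    - assert (s <= s0) by (apply Hub; split; auto).
      apply Hsn, He2. rewrite d_sym. apply Heta2; [lra|]. apply Rabs_def1; lra.
    - assert (s0 <= s0 - eta / 2); [|lra].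
      apply Hlub. intros s Hs. apply Rnot_lt_le. intros Hlt. apply Hno. exists s. split; [auto|lra]. }
  assert (Hlt : s0 < tau) by (destruct (Req_dec s0 tau) as [->|]; [contradiction|lra]).
  exists s0. split; [lra|].
  destruct (Hcl (p s0)) as [|]; [|contradiction|auto].
  intros e He. destruct (Hc s0 ltac:(lra) e He) as [eta [Heta Heta2]].
  set (r := Rmin tau (s0 + eta / 2)).
  assert (Hr : s0 < r <= tau) by (unfold r, Rmin; destruct Rle_dec; lra).
  exists (p r). split; [apply Hafter; auto|].
  rewrite d_sym. apply Heta2; [lra|]. apply Rabs_def1; unfold r, Rmin; destruct Rle_dec; lra.
Qed.

Lemma path_leaves_through (p : R -> X) (W : X -> Prop) (Q : X) :
  path_continuous d p ->
  (forall y, W y -> exists e, 0 < e /\ forall z, d y z < e -> W z) ->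
  (forall y, (forall e, 0 < e -> exists w, W w /\ d y w < e) -> W y \/ y = Q) ->
  ~ W (p 1) -> forall tau, 0 <= tau <= 1 -> W (p tau) ->
  exists s, tau < s <= 1 /\ p s = Q.
Proof.
  intros Hc Hop Hcl H1 tau Ht Hw.
  destruct (path_enters_through (fun t => p (1 - t)) W Q (path_rev_continuous p Hc) Hop Hcl)
    with (tau := 1 - tau) as [s [Hs Hps]].
  - replace (1 - 0) with 1 by lra. auto.
  - lra.
  - replace (1 - (1 - tau)) with tau by lra. auto.
  - exists (1 - s). split; [lra|auto].
Qed.

End Paths.

Section Metric.
Context {X : Type} (d : X -> X -> R).
Hypothesis d_metric : is_metric d.

Lemma dist_ge0 x y : 0 <= d x y.
Proof. apply d_metric. Qed.

Lemma dist_self x : d x x = 0.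
Proof. apply d_metric. auto. Qed.

Lemma dist_sym x y : d x y = d y x.
Proof. apply d_metric. Qed.

Lemma dist_triangle x y z : d x z <= d x y + d y z.
Proof. apply d_metric. Qed.

Lemma dist_pos x y : x <> y -> 0 < d x y.
Proof.
  intros Hne. destruct (dist_ge0 x y) as [|E]; auto.
  exfalso. apply Hne. apply d_metric. auto.
Qed.

Lemma geodesic_dist g x y r : is_geodesic d g x y -> 0 <= r <= d x y ->
  d x (g r) = r /\ d (g r) y = d x y - r.
Proof.
  intros [G0 [G1 G2]] Hr. split.
  - rewrite <- G0 at 1. rewrite G2 by lra. unfold Rabs; destruct Rcase_abs; lra.
  - rewrite <- G1 at 1. rewrite G2 by lra. unfold Rabs; destruct Rcase_abs; lra.
Qed.

Lemma geodesic_initial g x y r : is_geodesic d g x y -> 0 <= r <= d x y ->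
  is_geodesic d g x (g r).
Proof.
  intros Hg Hr. destruct (geodesic_dist g x y r Hg Hr) as [E _].
  destruct Hg as [G0 [_ G2]]. unfold is_geodesic. rewrite E.
  split; [auto|split; [auto|]]. intros s t Hs Ht. apply G2; lra.
Qed.

Lemma geodesic_reverse g x y : is_geodesic d g x y ->
  is_geodesic d (fun t => g (d x y - t)) y x.
Proof.
  intros [G0 [G1 G2]]. unfold is_geodesic. rewrite (dist_sym y x). split; [|split].
  - rewrite Rminus_0_r. auto.
  - rewrite Rminus_diag. auto.
  - intros s t Hs Ht. rewrite G2 by lra.
    replace (d x y - s - (d x y - t)) with (- (s - t)) by ring. apply Rabs_Ropp.
Qed.

Definition subpath (g : R -> X) (a b : R) : R -> X := fun t => g (a + t * (b - a)).

Lemma subpath_0 g a b : subpath g a b 0 = g a.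
Proof. unfold subpath. f_equal. ring. Qed.

Lemma subpath_1 g a b : subpath g a b 1 = g b.
Proof. unfold subpath. f_equal. ring. Qed.

Lemma subpath_range a b L t : 0 <= a <= L -> 0 <= b <= L -> 0 <= t <= 1 ->
  Rmin a b <= a + t * (b - a) /\ 0 <= a + t * (b - a) <= L.
Proof. intros Ha Hb Ht. unfold Rmin. destruct Rle_dec; split; try split; nra. Qed.

Lemma subpath_continuous g x y a b : is_geodesic d g x y ->
  0 <= a <= d x y -> 0 <= b <= d x y -> path_continuous d (subpath g a b).
Proof.
  intros [_ [_ G2]] Ha Hb. apply (lipschitz_path_continuous d _ (Rabs (b - a)) (Rabs_pos _)).
  intros s t Hs Ht. unfold subpath.
  destruct (subpath_range a b (d x y) s Ha Hb Hs) as [_ Rs].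
  destruct (subpath_range a b (d x y) t Ha Hb Ht) as [_ Rt].
  rewrite G2 by auto.
  replace (a + s * (b - a) - (a + t * (b - a))) with ((s - t) * (b - a)) by ring.
  rewrite Rabs_mult. lra.
Qed.

Lemma subpath_dist_ge g x y a b t : is_geodesic d g x y ->
  0 <= a <= d x y -> 0 <= b <= d x y -> 0 <= t <= 1 -> Rmin a b <= d x (subpath g a b t).
Proof.
  intros Hg Ha Hb Ht. destruct (subpath_range a b (d x y) t Ha Hb Ht) as [Rm Rt].
  unfold subpath. rewrite (proj1 (geodesic_dist g x y _ Hg Rt)). auto.
Qed.

Definition gromov_coord (a b y : X) : R := (d a y - d b y + d a b) / 2.

Lemma gromov_coord_lipschitz a b y z : Rabs (gromov_coord a b y - gromov_coord a b z) <= d y z.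
Proof.
  pose proof (dist_triangle a y z). pose proof (dist_triangle a z y).
  pose proof (dist_triangle b y z). pose proof (dist_triangle b z y). pose proof (dist_sym y z).
  unfold gromov_coord, Rabs; destruct Rcase_abs; lra.
Qed.

Lemma gromov_coord_range a b y : 0 <= gromov_coord a b y <= d a b.
Proof.
  pose proof (dist_triangle a y b). pose proof (dist_triangle a b y). pose proof (dist_triangle b a y).
  pose proof (dist_sym a b). pose proof (dist_sym b y).
  unfold gromov_coord; lra.
Qed.

End Metric.

Section MeetTree.
Context {T : Type} (ht : T -> R) (meet : T -> T -> R) (anc : T -> R -> T).
Hypothesis meet_sym : forall x y, meet x y = meet y x.
Hypothesis meet_diag : forall x, meet x x = ht x.
Hypothesis meet_ge0 : forall x y, 0 <= meet x y.
Hypothesis meet_le_ht : forall x y, meet x y <= ht x.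
Hypothesis meet_ultra : forall x y z, Rmin (meet x y) (meet y z) <= meet x z.
Hypothesis meet_eq_ht : forall x y, meet x y = ht x -> ht x = ht y -> x = y.
Hypothesis ht_anc : forall x t, 0 <= t <= ht x -> ht (anc x t) = t.
Hypothesis meet_anc : forall x t y, 0 <= t <= ht x -> meet (anc x t) y = Rmin t (meet x y).

Definition tdist x y := ht x + ht y - 2 * meet x y.

Lemma meet_le_ht_r x y : meet x y <= ht y.
Proof. rewrite meet_sym. apply meet_le_ht. Qed.

Lemma ht_ge0 x : 0 <= ht x.
Proof. rewrite <- meet_diag. apply meet_ge0. Qed.

Lemma meet_isosceles x y z :
  (meet x y = meet y z /\ meet x y <= meet x z) \/
  (meet x y = meet x z /\ meet x y <= meet y z) \/
  (meet y z = meet x z /\ meet y z <= meet x y).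
Proof.
  pose proof (meet_ultra x y z). pose proof (meet_ultra y z x). pose proof (meet_ultra z x y).
  rewrite (meet_sym z x), (meet_sym y x), (meet_sym z y) in *.
  unfold Rmin in *. repeat destruct Rle_dec; lra.
Qed.

Lemma tdist_metric : is_metric tdist.
Proof.
  unfold tdist; repeat split.
  - intros x y. pose proof (meet_le_ht x y). pose proof (meet_le_ht_r x y). lra.
  - intros H. pose proof (meet_le_ht x y). pose proof (meet_le_ht_r x y).
    apply meet_eq_ht; lra.
  - intros ->. rewrite meet_diag. lra.
  - intros x y. rewrite meet_sym. lra.
  - intros x y z.
    pose proof (meet_ultra x y z). pose proof (meet_le_ht_r x y). pose proof (meet_le_ht y z).
    unfold Rmin in *. destruct Rle_dec; lra.
Qed.

Lemma anc_ht x : anc x (ht x) = x.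
Proof.
  pose proof (ht_ge0 x). apply meet_eq_ht.
  - rewrite meet_anc, meet_diag, ht_anc by lra. apply Rmin_left. lra.
  - rewrite ht_anc by lra. auto.
Qed.

(* Descend from [a] to the branch point at height [meet a b], then climb to [b]. *)
Definition tgeod (a b : T) (t : R) : T :=
  if Rle_dec t (ht a - meet a b) then anc a (ht a - t)
  else anc b (t - ht a + 2 * meet a b).

Lemma tgeod_cases a b t : 0 <= t <= tdist a b ->
  (t <= ht a - meet a b /\ ht (tgeod a b t) = ht a - t /\
     forall w, meet (tgeod a b t) w = Rmin (ht a - t) (meet a w)) \/
  (ht a - meet a b < t /\ ht (tgeod a b t) = t - ht a + 2 * meet a b /\
     forall w, meet (tgeod a b t) w = Rmin (t - ht a + 2 * meet a b) (meet b w)).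
Proof.
  intros Ht. unfold tdist in Ht.
  pose proof (meet_le_ht a b). pose proof (meet_le_ht_r a b). pose proof (meet_ge0 a b).
  unfold tgeod; destruct Rle_dec.
  - left. split; [lra|]. split; [apply ht_anc; lra|]. intros; apply meet_anc; lra.
  - right. split; [lra|]. split; [apply ht_anc; lra|]. intros; apply meet_anc; lra.
Qed.

Lemma tgeod_geodesic a b : is_geodesic tdist (tgeod a b) a b.
Proof.
  pose proof (meet_le_ht a b). pose proof (meet_le_ht_r a b). pose proof (meet_ge0 a b).
  split; [|split].
  - unfold tgeod; destruct Rle_dec; [|lra]. rewrite Rminus_0_r. apply anc_ht.
  - unfold tgeod, tdist; destruct Rle_dec.
    + apply meet_eq_ht.
      * rewrite meet_anc, ht_anc by lra. apply Rmin_left. lra.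
      * rewrite ht_anc by lra. lra.
    + replace (ht a + ht b - 2 * meet a b - ht a + 2 * meet a b) with (ht b) by lra.
      apply anc_ht.
  - intros s t Hs Ht. unfold tdist in *.
    destruct (tgeod_cases a b s Hs) as [[s0 [s1 s2]]|[s0 [s1 s2]]];
    destruct (tgeod_cases a b t Ht) as [[t0 [t1 t2]]|[t0 [t1 t2]]];
      rewrite s1, t1, s2, (meet_sym _ (tgeod a b t)), t2;
      rewrite ?meet_diag, ?(meet_sym b a);
      unfold Rmin, Rabs; repeat destruct Rle_dec; repeat destruct Rcase_abs; lra.
Qed.

Local Notation tproj := (gromov_coord tdist).

Lemma tproj_locally_constant a b y z :
  tdist y z < tdist y (tgeod a b (tproj a b y)) -> tproj a b z = tproj a b y.
Proof.
  intros H. pose proof (gromov_coord_range tdist tdist_metric a b y) as Hr.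
  set (p := tproj a b y) in *.
  destruct (tgeod_cases a b _ Hr) as [[g0 [g1 g2]]|[g0 [g1 g2]]];
    unfold tdist in H; rewrite g1, (meet_sym y (tgeod a b p)), g2 in H;
    subst p; unfold gromov_coord, tdist in *;
    rewrite ?(meet_sym y a), ?(meet_sym y b) in *;
    pose proof (meet_isosceles a b y); pose proof (meet_isosceles a b z);
    pose proof (meet_isosceles a y z); pose proof (meet_isosceles b y z);
    pose proof (meet_le_ht a b); pose proof (meet_le_ht_r a b); pose proof (meet_ge0 a b);
    pose proof (meet_le_ht a y); pose proof (meet_le_ht_r a y); pose proof (meet_ge0 a y);
    pose proof (meet_le_ht b y); pose proof (meet_le_ht_r b y); pose proof (meet_ge0 b y);
    pose proof (meet_le_ht a z); pose proof (meet_le_ht_r a z); pose proof (meet_ge0 a z);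
    pose proof (meet_le_ht b z); pose proof (meet_le_ht_r b z); pose proof (meet_ge0 b z);
    pose proof (meet_le_ht y z); pose proof (meet_le_ht_r y z); pose proof (meet_ge0 y z);
    unfold Rmin in H; destruct Rle_dec;
    repeat match goal with h : _ \/ _ |- _ => destruct h as [[]|[[]|[]]] end; lra.
Qed.

Lemma tproj_a a b : tproj a b a = 0.
Proof.
  unfold gromov_coord. rewrite (dist_self tdist tdist_metric), (dist_sym tdist tdist_metric b a). lra.
Qed.

Lemma tproj_b a b : tproj a b b = tdist a b.
Proof. unfold gromov_coord. rewrite (dist_self tdist tdist_metric). lra. Qed.

Section Fibres.
Variables (a b : T) (t0 : R).
Let Q := tgeod a b t0.
Let fibre y := tproj a b y = t0 /\ y <> Q.
Let beyond y := t0 < tproj a b y.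

Lemma fibre_open y : fibre y -> exists e, 0 < e /\ forall z, tdist y z < e -> fibre z.
Proof.
  intros [Hy HQ]. exists (tdist y Q). split; [apply (dist_pos tdist tdist_metric); auto|].
  intros z Hz. split.
  - rewrite <- Hy. apply tproj_locally_constant. rewrite Hy. exact Hz.
  - intros ->. lra.
Qed.

Lemma fibre_closure y : (forall e, 0 < e -> exists w, fibre w /\ tdist y w < e) -> fibre y \/ y = Q.
Proof.
  intros Hy. destruct (classic (y = Q)) as [|HQ]; [right; auto|left; split; auto].
  destruct (Req_dec (tproj a b y) t0) as [|Hne]; auto. exfalso.
  destruct (Hy (Rabs (tproj a b y - t0))) as [w [[Hw _] Hyw]].
  { apply Rabs_pos_lt. lra. }
  pose proof (gromov_coord_lipschitz tdist tdist_metric a b y w). rewrite Hw in H. lra.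
Qed.

Lemma beyond_open y : beyond y -> exists e, 0 < e /\ forall z, tdist y z < e -> beyond z.
Proof.
  intros Hy. exists (tproj a b y - t0). split; [unfold beyond in Hy; lra|].
  intros z Hz. pose proof (gromov_coord_lipschitz tdist tdist_metric a b y z).
  unfold beyond. unfold Rabs in H; destruct Rcase_abs; lra.
Qed.

Lemma beyond_closure y : (forall e, 0 < e -> exists w, beyond w /\ tdist y w < e) -> beyond y \/ y = Q.
Proof.
  intros Hy. destruct (classic (beyond y)) as [|Hn]; [left; auto|right]. unfold beyond in *.
  assert (Hge : t0 <= tproj a b y).
  { apply Rnot_lt_le. intros Hlt.
    destruct (Hy (t0 - tproj a b y)) as [w [Hw Hyw]]; [lra|].
    pose proof (gromov_coord_lipschitz tdist tdist_metric a b y w).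
    unfold Rabs in H; destruct Rcase_abs; lra. }
  apply NNPP. intros HQ.
  destruct (Hy _ (dist_pos tdist tdist_metric y Q HQ)) as [w [Hw Hyw]].
  assert (tproj a b w = tproj a b y).
  { apply tproj_locally_constant. replace (tproj a b y) with t0 by lra. auto. }
  lra.
Qed.

End Fibres.

Lemma arc_in_tgeod a b p : is_arc tdist p a b ->
  forall s, 0 <= s <= 1 -> on_geod tdist (tgeod a b) a b (p s).
Proof.
  intros [Hc [Hp0 [Hp1 Hinj]]] s Hs.
  set (t0 := tproj a b (p s)).
  destruct (classic (p s = tgeod a b t0)) as [Heq|Hne].
  { exists t0. split; [apply gromov_coord_range, tdist_metric|auto]. }
  assert (HnA : ~ (tproj a b (p 0) = t0 /\ p 0 <> tgeod a b t0)).
  { rewrite Hp0. intros [E HQ]. apply HQ. rewrite <- E, tproj_a. symmetry. apply tgeod_geodesic. }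
  assert (HnB : ~ (tproj a b (p 1) = t0 /\ p 1 <> tgeod a b t0)).
  { rewrite Hp1. intros [E HQ]. apply HQ. rewrite <- E, tproj_b. symmetry. apply tgeod_geodesic. }
  pose proof (tdist_metric) as [_ [_ [Hsym _]]].
  destruct (path_enters_through tdist Hsym p _ _ Hc (fibre_open a b t0) (fibre_closure a b t0)
    HnA s Hs (conj eq_refl Hne)) as [s1 [Hs1 E1]].
  destruct (path_leaves_through tdist Hsym p _ _ Hc (fibre_open a b t0) (fibre_closure a b t0)
    HnB s Hs (conj eq_refl Hne)) as [s2 [Hs2 E2]].
  assert (s1 = s2) by (apply Hinj; [lra|lra|congruence]). lra.
Qed.

Lemma tgeod_in_arc a b p : is_arc tdist p a b ->
  forall t, 0 <= t <= tdist a b -> exists s, 0 <= s <= 1 /\ tgeod a b t = p s.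
Proof.
  intros [Hc [Hp0 [Hp1 _]]] t Ht.
  destruct (Req_dec t (tdist a b)) as [->|Hne].
  { exists 1. split; [lra|]. rewrite Hp1. apply tgeod_geodesic. }
  assert (HnA : ~ (t < tproj a b (p 0))) by (rewrite Hp0, tproj_a; lra).
  assert (HB : t < tproj a b (p 1)) by (rewrite Hp1, tproj_b; lra).
  pose proof (tdist_metric) as [_ [_ [Hsym _]]].
  destruct (path_enters_through tdist Hsym p _ _ Hc (beyond_open a b t) (beyond_closure a b t)
    HnA 1 ltac:(lra) HB) as [s [Hs E]].
  exists s. split; [lra|auto].
Qed.

Theorem tdist_R_tree : R_tree tdist.
Proof.
  split; [apply tdist_metric|]. intros a b.
  exists (tgeod a b). split; [apply tgeod_geodesic|]. intros p Hp q. split.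
  - intros [s [Hs ->]]. apply arc_in_tgeod; auto.
  - intros [t [Ht ->]]. apply tgeod_in_arc; auto.
Qed.

End MeetTree.

Section Gluing.
Context {I : Type} (len : I -> R) (ov : I -> I -> R).
Hypothesis ov_diag : forall i, ov i i = len i.
Hypothesis ov_sym : forall i j, ov i j = ov j i.
Hypothesis ov_ge0 : forall i j, 0 <= ov i j.
Hypothesis ov_le_len : forall i j, ov i j <= len i.
Hypothesis ov_ultra : forall i j k, Rmin (ov i j) (ov j k) <= ov i k.

(* The segments [0, len i] are glued along their initial pieces [0, ov i j]; the point at height [s]
   of segment [i] is represented by its equivalence class, as a relation between indices and heights. *)
Definition glue_class (i : I) (s : R) : I -> R -> Prop := fun j t => t = s /\ s <= ov i j.

Definition glued := {S : I -> R -> Prop | exists i s, 0 <= s <= len i /\ S = glue_class i s}.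

Lemma len_ge0 i : 0 <= len i.
Proof. rewrite <- ov_diag. apply ov_ge0. Qed.

Definition clamp i s := Rmax 0 (Rmin s (len i)).

Lemma clamp_range i s : 0 <= clamp i s <= len i.
Proof. pose proof (len_ge0 i). unfold clamp, Rmax, Rmin. repeat destruct Rle_dec; lra. Qed.

Lemma clamp_id i s : 0 <= s <= len i -> clamp i s = s.
Proof. intros. unfold clamp, Rmax, Rmin. repeat destruct Rle_dec; lra. Qed.

Definition gpoint (i : I) (s : R) : glued :=
  exist _ (glue_class i (clamp i s))
    (ex_intro _ i (ex_intro _ (clamp i s) (conj (clamp_range i s) eq_refl))).

Lemma glued_eq (S S' : glued) : proj1_sig S = proj1_sig S' -> S = S'.
Proof. destruct S, S'; simpl. intros ->. f_equal. apply proof_irrelevance. Qed.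

Lemma ov_le_trans i j k s : s <= ov i j -> s <= ov j k -> s <= ov i k.
Proof. intros H1 H2. pose proof (ov_ultra i j k). unfold Rmin in *. destruct Rle_dec; lra. Qed.

Lemma Rmin_ov_congr i' i j s : s <= ov i i' -> Rmin s (ov i' j) = Rmin s (ov i j).
Proof.
  intros H. pose proof (ov_ultra i i' j). pose proof (ov_ultra i' i j). rewrite (ov_sym i' i) in *.
  unfold Rmin in *. repeat destruct Rle_dec; lra.
Qed.

Lemma glue_class_eq i j s : s <= ov i j -> glue_class i s = glue_class j s.
Proof.
  intros Hs. apply functional_extensionality; intro k.
  apply functional_extensionality; intro t. apply propositional_extensionality.
  unfold glue_class. split; intros [-> Hk]; split; auto.
  - apply (ov_le_trans j i k); auto. rewrite ov_sym; auto.
  - apply (ov_le_trans i j k); auto.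
Qed.

Lemma gpoint_eq i j s : 0 <= s <= len i -> s <= ov i j -> gpoint i s = gpoint j s.
Proof.
  intros Hs Hij. assert (s <= len j) by (rewrite ov_sym in Hij; pose proof (ov_le_len j i); lra).
  apply glued_eq. simpl. rewrite !clamp_id by lra. apply glue_class_eq. auto.
Qed.

Lemma gpoint_inv i s j t : 0 <= s <= len i -> 0 <= t <= len j ->
  gpoint i s = gpoint j t -> s = t /\ s <= ov i j.
Proof.
  intros Hs Ht E. apply (f_equal (@proj1_sig _ _)) in E. unfold gpoint in E; simpl in E.
  rewrite !clamp_id in E by lra.
  assert (Hii : glue_class i s i s) by (split; [auto|rewrite ov_diag; lra]).
  rewrite E in Hii. destruct Hii as [-> Hji]. rewrite ov_sym. auto.
Qed.

Lemma gpoint_surj (S : glued) : exists p : I * R,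
  0 <= snd p <= len (fst p) /\ S = gpoint (fst p) (snd p).
Proof.
  destruct S as [S [i [s [Hs ->]]]]. exists (i, s). simpl. split; [auto|].
  apply glued_eq. simpl. rewrite clamp_id; auto.
Qed.

Definition rep (S : glued) : I * R :=
  proj1_sig (constructive_indefinite_description _ (gpoint_surj S)).

Lemma rep_spec S : 0 <= snd (rep S) <= len (fst (rep S)) /\ S = gpoint (fst (rep S)) (snd (rep S)).
Proof. unfold rep. apply proj2_sig. Qed.

Definition gheight (S : glued) : R := snd (rep S).

Definition gmeet (S S' : glued) : R :=
  Rmin (Rmin (gheight S) (gheight S')) (ov (fst (rep S)) (fst (rep S'))).

Definition ganc (S : glued) (t : R) : glued := gpoint (fst (rep S)) t.

Lemma rep_gpoint i s : 0 <= s <= len i ->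
  snd (rep (gpoint i s)) = s /\ s <= ov i (fst (rep (gpoint i s))).
Proof.
  intros Hs. destruct (rep_spec (gpoint i s)) as [Hr E].
  destruct (gpoint_inv _ _ _ _ Hs Hr E) as [E1 E2]. auto.
Qed.

Lemma gheight_gpoint i s : 0 <= s <= len i -> gheight (gpoint i s) = s.
Proof. intros Hs. apply (proj1 (rep_gpoint i s Hs)). Qed.

Lemma gmeet_gpoint i s j t : 0 <= s <= len i -> 0 <= t <= len j ->
  gmeet (gpoint i s) (gpoint j t) = Rmin (Rmin s t) (ov i j).
Proof.
  intros Hs Ht. unfold gmeet, gheight.
  destruct (rep_gpoint i s Hs) as [-> Hi]. destruct (rep_gpoint j t Ht) as [-> Hj].
  set (i' := fst (rep (gpoint i s))) in *. set (j' := fst (rep (gpoint j t))) in *.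
  pose proof (Rmin_l s t). pose proof (Rmin_r s t).
  rewrite (Rmin_ov_congr i' i j') by lra.
  rewrite (ov_sym i j'), (Rmin_ov_congr j' j i), (ov_sym j i) by lra. auto.
Qed.

Lemma ganc_gpoint i s t : 0 <= s <= len i -> 0 <= t <= s -> ganc (gpoint i s) t = gpoint i t.
Proof.
  intros Hs Ht. unfold ganc. destruct (rep_gpoint i s Hs) as [Er Hi].
  destruct (rep_spec (gpoint i s)) as [Hr _].
  apply gpoint_eq; [lra|]. rewrite ov_sym. lra.
Qed.

Lemma gpoint_cover (P : glued -> Prop) :
  (forall i s, 0 <= s <= len i -> P (gpoint i s)) -> forall S, P S.
Proof. intros H S. destruct (gpoint_surj S) as [[i s] [Hs ->]]. apply H; auto. Qed.

Lemma gheight_range S : 0 <= gheight S <= len (fst (rep S)).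
Proof. apply rep_spec. Qed.

Lemma gmeet_sym S S' : gmeet S S' = gmeet S' S.
Proof. unfold gmeet. rewrite (Rmin_comm (gheight S)), ov_sym. auto. Qed.

Lemma gmeet_diag S : gmeet S S = gheight S.
Proof.
  pose proof (gheight_range S). unfold gmeet. rewrite ov_diag.
  unfold Rmin. repeat destruct Rle_dec; lra.
Qed.

Lemma gmeet_ge0 S S' : 0 <= gmeet S S'.
Proof.
  pose proof (gheight_range S). pose proof (gheight_range S').
  pose proof (ov_ge0 (fst (rep S)) (fst (rep S'))).
  unfold gmeet, Rmin. repeat destruct Rle_dec; lra.
Qed.

Lemma gmeet_le_gheight S S' : gmeet S S' <= gheight S.
Proof. unfold gmeet, Rmin. repeat destruct Rle_dec; lra. Qed.

Lemma gmeet_ultra S S' S'' : Rmin (gmeet S S') (gmeet S' S'') <= gmeet S S''.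
Proof.
  pose proof (ov_ultra (fst (rep S)) (fst (rep S')) (fst (rep S''))).
  unfold gmeet, Rmin in *. repeat destruct Rle_dec; lra.
Qed.

Lemma gmeet_eq_gheight S S' : gmeet S S' = gheight S -> gheight S = gheight S' -> S = S'.
Proof.
  revert S'. induction S as [i s Hs] using gpoint_cover. intros S'.
  induction S' as [j t Ht] using gpoint_cover.
  rewrite gmeet_gpoint, !gheight_gpoint by auto. intros E ->.
  apply gpoint_eq; auto. rewrite <- E. apply Rmin_r.
Qed.

Lemma gheight_ganc S t : 0 <= t <= gheight S -> gheight (ganc S t) = t.
Proof.
  induction S as [i s Hs] using gpoint_cover. rewrite gheight_gpoint by auto. intros Ht.
  rewrite ganc_gpoint, gheight_gpoint by lra. auto.
Qed.

Lemma gmeet_ganc S t S' : 0 <= t <= gheight S -> gmeet (ganc S t) S' = Rmin t (gmeet S S').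
Proof.
  induction S as [i s Hs] using gpoint_cover. induction S' as [j u Hu] using gpoint_cover.
  rewrite gheight_gpoint by auto. intros Ht.
  rewrite ganc_gpoint, !gmeet_gpoint by lra. unfold Rmin. repeat destruct Rle_dec; lra.
Qed.

Theorem glued_R_tree : R_tree (tdist gheight gmeet).
Proof.
  apply (tdist_R_tree gheight gmeet ganc gmeet_sym gmeet_diag gmeet_ge0 gmeet_le_gheight gmeet_ultra
    gmeet_eq_gheight gheight_ganc gmeet_ganc).
Qed.

Lemma glued_dist i s j t : 0 <= s <= len i -> 0 <= t <= len j ->
  tdist gheight gmeet (gpoint i s) (gpoint j t) = s + t - 2 * Rmin (Rmin s t) (ov i j).
Proof. intros Hs Ht. unfold tdist. rewrite !gheight_gpoint, gmeet_gpoint by auto. auto. Qed.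

End Gluing.

Section Hyperbolic.
Context {X : Type} (d : X -> X -> R) (delta : R).
Hypothesis d_metric : is_metric d.
Hypothesis d_hyp : hyperbolic d delta.

Lemma hyperbolic_delta_ge0 (x : X) : 0 <= delta.
Proof.
  assert (Hc : is_geodesic d (fun _ => x) x x).
  { split; [auto|split; [auto|]]. intros s t Hs Ht. rewrite (dist_self d d_metric) in *.
    replace s with 0 by lra. replace t with 0 by lra. rewrite Rminus_0_r, Rabs_R0. auto. }
  destruct (d_hyp x x x _ _ _ Hc Hc Hc x) as [q [_ Hq]].
  - exists 0. rewrite (dist_self d d_metric). split; [lra|auto].
  - pose proof (dist_ge0 d d_metric x q). lra.
Qed.

(* Walking along [a,b], the side of the triangle that is delta-close switches from [c,a] to [b,c]
   somewhere; the switching parameter is a supremum. *)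
Lemma slim_switch a b c g1 g2 g3 :
  is_geodesic d g1 a b -> is_geodesic d g2 b c -> is_geodesic d g3 c a ->
  forall e, 0 < e -> exists t1 t2 r1 r2,
    0 <= t1 <= t2 /\ t2 <= d a b /\ t2 - t1 <= e /\
    0 <= r1 <= d c a /\ d (g1 t1) (g3 r1) <= delta /\
    0 <= r2 <= d b c /\ d (g1 t2) (g2 r2) <= delta.
Proof.
  intros H1 H2 H3 e He.
  pose proof (dist_ge0 d d_metric a b) as Hab.
  set (S := fun t => 0 <= t <= d a b /\ exists r, 0 <= r <= d c a /\ d (g1 t) (g3 r) <= delta).
  assert (HS0 : S 0).
  { split; [lra|]. exists (d c a). split; [split; [apply (dist_ge0 d d_metric)|lra]|].
    destruct H1 as [-> _]. destruct H3 as [_ [-> _]]. rewrite (dist_self d d_metric).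
    apply (hyperbolic_delta_ge0 a). }
  assert (Hb : bound S) by (exists (d a b); intros t [Ht _]; lra).
  destruct (completeness S Hb (ex_intro _ 0 HS0)) as [ts [Hub Hlub]].
  assert (Hts : 0 <= ts <= d a b) by (split; [apply Hub; auto|apply Hlub; intros t [Ht _]; lra]).
  destruct (classic (exists t1, S t1 /\ ts - e / 2 < t1)) as [[t1 [[Ht1 [r1 [Hr1 Hd1]]] Ht1e]]|Hno].
  2:{ exfalso. assert (ts <= ts - e / 2); [|lra]. apply Hlub. intros t Ht. apply Rnot_lt_le.
      intros Hlt. apply Hno. exists t. split; auto. }
  assert (Ht1ts : t1 <= ts) by (apply Hub; split; [lra|exists r1; auto]).
  set (t2 := Rmin (d a b) (ts + e / 2)).
  assert (Ht2 : t1 <= t2 <= d a b /\ t2 - t1 <= e) by (unfold t2, Rmin; destruct Rle_dec; lra).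
  assert (HQ2 : exists r2, 0 <= r2 <= d b c /\ d (g1 t2) (g2 r2) <= delta).
  { destruct (Req_dec ts (d a b)) as [Heq|Hne].
    - assert (E : t2 = d a b) by (unfold t2, Rmin; destruct Rle_dec; lra).
      exists 0. split; [split; [lra|apply (dist_ge0 d d_metric)]|].
      destruct H1 as [_ [G1 _]]. destruct H2 as [G2 _]. rewrite E, G1, G2, (dist_self d d_metric).
      apply (hyperbolic_delta_ge0 a).
    - assert (Hgt : ts < t2) by (unfold t2, Rmin; destruct Rle_dec; lra).
      destruct (d_hyp a b c g1 g2 g3 H1 H2 H3 (g1 t2)) as [q [[[r [Hr ->]]|[r [Hr ->]]] Hdq]].
      + exists t2. split; [lra|auto].
      + exists r. auto.
      + exfalso. assert (t2 <= ts); [|lra]. apply Hub. split; [lra|]. exists r; auto. }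
  destruct HQ2 as [r2 [Hr2 Hd2]].
  exists t1, t2, r1, r2. repeat split; lra.
Qed.

Lemma dist_to_side_le a b c g1 g2 g3 :
  is_geodesic d g1 a b -> is_geodesic d g2 b c -> is_geodesic d g3 c a ->
  forall e, 0 < e -> exists t, 0 <= t <= d a b /\
    2 * d c (g1 t) <= d c a + d c b - d a b + 4 * delta + 2 * e.
Proof.
  intros H1 H2 H3 e He.
  destruct (slim_switch a b c g1 g2 g3 H1 H2 H3 e He)
    as [t1 [t2 [r1 [r2 [Ht [Ht2 [Hte [Hr1 [Hd1 [Hr2 Hd2]]]]]]]]]].
  destruct (geodesic_dist d g1 a b t1 H1 ltac:(lra)) as [E1 _].
  destruct (geodesic_dist d g1 a b t2 H1 ltac:(lra)) as [_ E2].
  destruct (geodesic_dist d g2 b c r2 H2 Hr2) as [F1 F2].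
  destruct (geodesic_dist d g3 c a r1 H3 Hr1) as [G1 G2].
  assert (Hsep : d (g1 t1) (g1 t2) = t2 - t1).
  { destruct H1 as [_ [_ G]]. rewrite G by lra. rewrite Rabs_minus_sym. apply Rabs_right. lra. }
  pose proof (dist_triangle d d_metric a (g3 r1) (g1 t1)).
  pose proof (dist_triangle d d_metric c (g3 r1) (g1 t1)).
  pose proof (dist_triangle d d_metric b (g2 r2) (g1 t2)).
  pose proof (dist_triangle d d_metric c (g2 r2) (g1 t2)).
  pose proof (dist_triangle d d_metric c (g1 t2) (g1 t1)).
  pose proof (dist_sym d d_metric (g1 t2) (g1 t1)). pose proof (dist_sym d d_metric a (g3 r1)).
  pose proof (dist_sym d d_metric (g3 r1) (g1 t1)). pose proof (dist_sym d d_metric (g2 r2) (g1 t2)).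
  pose proof (dist_sym d d_metric (g2 r2) c). pose proof (dist_sym d d_metric c b).
  pose proof (dist_sym d d_metric (g1 t2) b).
  exists t1. split; [lra|]. lra.
Qed.

End Hyperbolic.

(* Junk value [0] unless [E] is nonempty and bounded. *)
Definition lub (E : R -> Prop) : R :=
  match excluded_middle_informative (bound E /\ exists x, E x) with
  | left H => proj1_sig (completeness E (proj1 H) (proj2 H))
  | right _ => 0
  end.

Lemma lub_spec E : bound E -> (exists x, E x) -> is_lub E (lub E).
Proof.
  intros Hb Hn. unfold lub. destruct excluded_middle_informative as [H|H].
  - apply proj2_sig.
  - exfalso. auto.
Qed.

Section Overlap.
Context {X : Type} (d : X -> X -> R).
Hypothesis d_metric : is_metric d.
Variables (x0 : X) (Z : X -> Prop) (gam : X -> R -> X).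
Hypothesis gam_geodesic : forall z, Z z -> is_geodesic d (gam z) x0 z.

Lemma gam_dist z s : Z z -> 0 <= s <= d x0 z -> d x0 (gam z s) = s.
Proof. intros Hz Hs. apply (geodesic_dist d _ _ _ _ (gam_geodesic z Hz) Hs). Qed.

Lemma gam_0 z : Z z -> gam z 0 = x0.
Proof. intros Hz. apply (gam_geodesic z Hz). Qed.

Definition linked (u : R) (z z' : X) : Prop :=
  0 <= u <= d x0 z /\ u <= d x0 z' /\ exists p, path_continuous d p /\
    p 0 = gam z u /\ p 1 = gam z' u /\ forall t, 0 <= t <= 1 -> u <= d x0 (p t).

Lemma linked_intro u z z' s s' p : Z z -> Z z' -> 0 <= u ->
  u <= s <= d x0 z -> u <= s' <= d x0 z' -> path_continuous d p ->
  p 0 = gam z s -> p 1 = gam z' s' -> (forall t, 0 <= t <= 1 -> u <= d x0 (p t)) ->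
  linked u z z'.
Proof.
  intros Hz Hz' Hu Hs Hs' Hc P0 P1 Hp. split; [lra|]. split; [lra|].
  pose proof (gam_geodesic z Hz) as Gz. pose proof (gam_geodesic z' Hz') as Gz'.
  exists (concat (concat (subpath (gam z) u s) p) (subpath (gam z') s' u)). split; [|split; [|split]].
  - apply concat_continuous; [apply concat_continuous| |].
    + apply (subpath_continuous d _ _ _ _ _ Gz); lra.
    + auto.
    + rewrite subpath_1. auto.
    + apply (subpath_continuous d _ _ _ _ _ Gz'); lra.
    + rewrite concat_1, subpath_0. auto.
  - rewrite !concat_0. apply subpath_0.
  - rewrite concat_1. apply subpath_1.
  - apply (concat_forall (fun x => u <= d x0 x)); [apply (concat_forall (fun x => u <= d x0 x))|]; auto;
      intros t Ht.
    + pose proof (subpath_dist_ge d _ _ _ u s t Gz ltac:(lra) ltac:(lra) Ht).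
      rewrite Rmin_left in H; lra.
    + pose proof (subpath_dist_ge d _ _ _ s' u t Gz' ltac:(lra) ltac:(lra) Ht).
      rewrite Rmin_right in H; lra.
Qed.

Lemma linked_of_eq u z z' : Z z -> Z z' -> 0 <= u <= d x0 z -> 0 <= u <= d x0 z' ->
  gam z u = gam z' u -> linked u z z'.
Proof.
  intros Hz Hz' Hu Hu' E. split; [lra|]. split; [lra|].
  exists (fun _ => gam z u). split; [|split; [|split]]; auto.
  - apply (lipschitz_path_continuous d _ 0); [lra|]. intros. rewrite (dist_self d d_metric). lra.
  - intros. rewrite gam_dist; auto. lra.
Qed.

Lemma linked_mono u v z z' : Z z -> Z z' -> linked u z z' -> 0 <= v <= u -> linked v z z'.
Proof.
  intros Hz Hz' [Hu [Hu' [p [Hc [P0 [P1 Hp]]]]]] Hv.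
  apply (linked_intro v z z' u u p); auto; try lra.
  intros t Ht. specialize (Hp t Ht). lra.
Qed.

Lemma linked_sym u z z' : linked u z z' -> linked u z' z.
Proof.
  intros [Hu [Hu' [p [Hc [P0 [P1 Hp]]]]]]. split; [lra|]. split; [lra|].
  exists (fun t => p (1 - t)). split; [apply path_rev_continuous; auto|].
  rewrite Rminus_0_r, Rminus_diag. split; [auto|split; [auto|]].
  intros t Ht. apply Hp. lra.
Qed.

Lemma linked_trans u z z' z'' : linked u z z' -> linked u z' z'' -> linked u z z''.
Proof.
  intros [Hu [Hu' [p [Hc [P0 [P1 Hp]]]]]] [_ [Hu'' [q [Hqc [Q0 [Q1 Hq]]]]]].
  split; [lra|]. split; [lra|]. exists (concat p q). split; [|split; [|split]].
  - apply concat_continuous; auto. congruence.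
  - rewrite concat_0. auto.
  - rewrite concat_1. auto.
  - apply (concat_forall (fun x => u <= d x0 x)); auto.
Qed.

Definition overlap (z z' : X) : R := lub (fun u => linked u z z').

Lemma linked_0 z z' : Z z -> Z z' -> linked 0 z z'.
Proof.
  intros Hz Hz'. pose proof (dist_ge0 d d_metric x0 z). pose proof (dist_ge0 d d_metric x0 z').
  apply linked_of_eq; auto; try lra. rewrite !gam_0; auto.
Qed.

Lemma overlap_lub z z' : Z z -> Z z' -> is_lub (fun u => linked u z z') (overlap z z').
Proof.
  intros Hz Hz'. apply lub_spec.
  - exists (d x0 z). intros u Hu. apply Hu.
  - exists 0. apply linked_0; auto.
Qed.

Lemma overlap_ge u z z' : Z z -> Z z' -> linked u z z' -> u <= overlap z z'.
Proof. intros Hz Hz' H. apply (overlap_lub z z' Hz Hz'). auto. Qed.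

Lemma overlap_ge0 z z' : Z z -> Z z' -> 0 <= overlap z z'.
Proof. intros Hz Hz'. apply overlap_ge; auto. apply linked_0; auto. Qed.

Lemma overlap_le z z' : Z z -> Z z' -> overlap z z' <= d x0 z.
Proof. intros Hz Hz'. apply (overlap_lub z z' Hz Hz'). intros u Hu. apply Hu. Qed.

Lemma linked_of_lt u z z' : Z z -> Z z' -> 0 <= u < overlap z z' -> linked u z z'.
Proof.
  intros Hz Hz' Hu. destruct (overlap_lub z z' Hz Hz') as [Hub Hlub].
  destruct (classic (exists v, linked v z z' /\ u <= v)) as [[v [Hv Huv]]|Hno].
  - apply (linked_mono v); auto. lra.
  - assert (overlap z z' <= u); [|lra]. apply Hlub. intros v Hv. apply Rnot_lt_le. intros Hlt.
    apply Hno. exists v. split; [auto|lra].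
Qed.

Lemma overlap_diag z : Z z -> overlap z z = d x0 z.
Proof.
  intros Hz. apply Rle_antisym; [apply overlap_le; auto|].
  apply overlap_ge; auto. pose proof (dist_ge0 d d_metric x0 z). apply linked_of_eq; auto; lra.
Qed.

Lemma overlap_sym z z' : overlap z z' = overlap z' z.
Proof.
  unfold overlap. f_equal. apply functional_extensionality; intro u.
  apply propositional_extensionality. split; apply linked_sym.
Qed.

Lemma overlap_ultra z z' z'' : Z z -> Z z' -> Z z'' ->
  Rmin (overlap z z') (overlap z' z'') <= overlap z z''.
Proof.
  intros Hz Hz' Hz''. apply le_of_forall_lt; [apply overlap_ge0; auto|].
  intros u Hu. apply overlap_ge; auto.
  pose proof (Rmin_l (overlap z z') (overlap z' z'')).
  pose proof (Rmin_r (overlap z z') (overlap z' z'')).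
  apply linked_trans with z'; apply linked_of_lt; auto; lra.
Qed.

Hypothesis d_geodesic : forall x y, exists g, is_geodesic d g x y.

Lemma gromov_le_overlap z z' s s' : Z z -> Z z' -> 0 <= s <= d x0 z -> 0 <= s' <= d x0 z' ->
  (s + s' - d (gam z s) (gam z' s')) / 2 <= overlap z z'.
Proof.
  intros Hz Hz' Hs Hs'. set (x := gam z s). set (y := gam z' s').
  assert (hx : d x0 x = s) by (apply gam_dist; auto).
  assert (hy : d x0 y = s') by (apply gam_dist; auto).
  pose proof (dist_triangle d d_metric x x0 y). pose proof (dist_triangle d d_metric x0 x y).
  pose proof (dist_triangle d d_metric x0 y x).
  pose proof (dist_sym d d_metric x x0). pose proof (dist_sym d d_metric x y).
  destruct (d_geodesic x y) as [k Hk]. pose proof Hk as [K0 [K1 _]].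
  apply overlap_ge; auto. apply (linked_intro _ z z' s s' (subpath k 0 (d x y))); auto; try lra.
  - apply (subpath_continuous d _ _ _ _ _ Hk); pose proof (dist_ge0 d d_metric x y); lra.
  - rewrite subpath_0. auto.
  - rewrite subpath_1. auto.
  - intros t Ht. unfold subpath. set (r := 0 + t * (d x y - 0)).
    assert (Hr : 0 <= r <= d x y) by (unfold r; pose proof (dist_ge0 d d_metric x y); nra).
    destruct (geodesic_dist d k x y r Hk Hr) as [E1 E2].
    pose proof (dist_triangle d d_metric x0 (k r) x). pose proof (dist_triangle d d_metric x0 (k r) y).
    pose proof (dist_sym d d_metric x (k r)). lra.
Qed.

Variables (delta Delta : R).
Hypothesis d_hyp : hyperbolic d delta.
Hypothesis d_bottleneck : bottleneck d Delta.

Lemma linked_dist_le u z z' : Z z -> Z z' -> linked u z z' ->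
  d (gam z u) (gam z' u) <= 2 * Delta + 4 * delta.
Proof.
  intros Hz Hz' [Hu [Hu' [p [Hc [P0 [P1 Hp]]]]]].
  set (a := gam z u) in *. set (b := gam z' u) in *.
  assert (ha : d x0 a = u) by (apply gam_dist; auto).
  assert (hb : d x0 b = u) by (apply gam_dist; auto; lra).
  destruct (d_geodesic a b) as [g1 G1].
  pose proof (geodesic_reverse d d_metric _ _ _
    (geodesic_initial d _ _ _ u (gam_geodesic z' Hz') ltac:(lra))) as G2.
  pose proof (geodesic_initial d _ _ _ u (gam_geodesic z Hz) ltac:(lra)) as G3.
  apply Rle_plus_epsilon. intros e He.
  destruct (dist_to_side_le d delta d_metric d_hyp a b x0 g1 _ _ G1 G2 G3 (e / 2) ltac:(lra))
    as [t [Ht Hdt]].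
  destruct d_bottleneck as [_ Hbot].
  destruct (Hbot a b g1 G1 (g1 t) (ex_intro _ t (conj Ht eq_refl)) p Hc P0 P1) as [tau [Htau Hdtau]].
  specialize (Hp tau Htau).
  pose proof (dist_triangle d d_metric x0 (g1 t) (p tau)).
  pose proof (dist_sym d d_metric (g1 t) (p tau)).
  pose proof (dist_sym d d_metric x0 b). lra.
Qed.

Lemma branch_dist_bounds z z' s s' : Z z -> Z z' -> 0 <= s <= d x0 z -> 0 <= s' <= d x0 z' ->
  d (gam z s) (gam z' s') - 2 * (Delta + 2 * delta) <=
    s + s' - 2 * Rmin (Rmin s s') (overlap z z') <= d (gam z s) (gam z' s').
Proof.
  intros Hz Hz' Hs Hs'. set (D := d (gam z s) (gam z' s')).
  assert (hx : d x0 (gam z s) = s) by (apply gam_dist; auto).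
  assert (hy : d x0 (gam z' s') = s') by (apply gam_dist; auto).
  pose proof (dist_triangle d d_metric (gam z s) x0 (gam z' s')).
  pose proof (dist_triangle d d_metric x0 (gam z s) (gam z' s')).
  pose proof (dist_triangle d d_metric x0 (gam z' s') (gam z s)).
  pose proof (dist_sym d d_metric (gam z s) x0). pose proof (dist_sym d d_metric (gam z s) (gam z' s')).
  pose proof (gromov_le_overlap z z' s s' Hz Hz' Hs Hs').
  pose proof (hyperbolic_delta_ge0 d delta d_metric d_hyp x0). pose proof (proj1 d_bottleneck).
  assert (Hm : Rmin (Rmin s s') (overlap z z') <= (s + s' - D) / 2 + (Delta + 2 * delta)).
  { apply le_of_forall_lt; [unfold D in *; lra|]. intros u Hu.
    pose proof (Rmin_l (Rmin s s') (overlap z z')). pose proof (Rmin_r (Rmin s s') (overlap z z')).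
    pose proof (Rmin_l s s'). pose proof (Rmin_r s s').
    pose proof (linked_dist_le u z z' Hz Hz' (linked_of_lt u z z' Hz Hz' ltac:(lra))).
    pose proof (dist_triangle d d_metric (gam z s) (gam z u) (gam z' s')).
    pose proof (dist_triangle d d_metric (gam z u) (gam z' u) (gam z' s')).
    destruct (gam_geodesic z Hz) as [_ [_ Iz]]. destruct (gam_geodesic z' Hz') as [_ [_ Iz']].
    rewrite Iz in * by lra. rewrite Iz' in * by lra.
    rewrite Rabs_right in * by lra. rewrite Rabs_left1 in * by lra. unfold D in *. lra. }
  split; [lra|]. unfold D in *. unfold Rmin in *. repeat destruct Rle_dec; lra.
Qed.

End Overlap.

Section Construction.
Context {X : Type} (d : X -> X -> R).
Hypothesis d_metric : is_metric d.
Variables (x0 : X) (Z : X -> Prop) (gam : X -> R -> X).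
Hypothesis gam_geodesic : forall z, Z z -> is_geodesic d (gam z) x0 z.

(* The extra branch [None] is the degenerate segment {x0}: the tree is nonempty even if [Z] is empty. *)
Definition branch : Type := option {z : X | Z z}.

Definition branch_len (i : branch) : R :=
  match i with Some z => d x0 (proj1_sig z) | None => 0 end.

Definition branch_ov (i j : branch) : R :=
  match i, j with
  | Some z, Some z' => overlap d x0 gam (proj1_sig z) (proj1_sig z')
  | _, _ => 0
  end.

Lemma branch_ov_diag i : branch_ov i i = branch_len i.
Proof.
  destruct i as [[z Hz]|]; simpl; auto. apply (overlap_diag d d_metric x0 Z gam gam_geodesic); auto.
Qed.

Lemma branch_ov_sym i j : branch_ov i j = branch_ov j i.
Proof. destruct i as [[z Hz]|], j as [[z' Hz']|]; simpl; auto. apply overlap_sym. Qed.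

Lemma branch_ov_ge0 i j : 0 <= branch_ov i j.
Proof.
  destruct i as [[z Hz]|], j as [[z' Hz']|]; simpl; try lra.
  apply (overlap_ge0 d d_metric x0 Z gam gam_geodesic); auto.
Qed.

Lemma branch_ov_le_len i j : branch_ov i j <= branch_len i.
Proof.
  destruct i as [[z Hz]|], j as [[z' Hz']|]; simpl; try lra.
  - apply (overlap_le d d_metric x0 Z gam gam_geodesic); auto.
  - apply (dist_ge0 d d_metric).
Qed.

Lemma branch_ov_ultra i j k : Rmin (branch_ov i j) (branch_ov j k) <= branch_ov i k.
Proof.
  pose proof (branch_ov_ge0 i j). pose proof (branch_ov_ge0 j k). pose proof (branch_ov_ge0 i k).
  destruct i as [[z Hz]|], j as [[z' Hz']|], k as [[z'' Hz'']|]; simpl in *;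
    try (apply (overlap_ultra d d_metric x0 Z gam gam_geodesic); auto);
    unfold Rmin; destruct Rle_dec; lra.
Qed.

Definition tree_point : branch -> R -> glued branch_len branch_ov :=
  gpoint branch_len branch_ov branch_ov_diag branch_ov_ge0.

Definition tree_dist : glued branch_len branch_ov -> glued branch_len branch_ov -> R :=
  tdist (gheight branch_len branch_ov branch_ov_diag branch_ov_ge0)
    (gmeet branch_len branch_ov branch_ov_diag branch_ov_ge0).

Lemma tree_dist_R_tree : R_tree tree_dist.
Proof. apply glued_R_tree; [apply branch_ov_sym|apply branch_ov_le_len|apply branch_ov_ultra]. Qed.

Definition tree_map (x : X) : glued branch_len branch_ov :=
  match excluded_middle_informative
    (exists i : {z | Z z}, on_geod d (gam (proj1_sig i)) x0 (proj1_sig i) x) with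
  | left H => tree_point (Some (proj1_sig (constructive_indefinite_description _ H))) (d x0 x)
  | right _ => tree_point None 0
  end.

Lemma tree_map_gam z (Hz : Z z) s : 0 <= s <= d x0 z ->
  tree_map (gam z s) = tree_point (Some (exist _ z Hz)) s.
Proof.
  intros Hs. unfold tree_map. destruct excluded_middle_informative as [H|H].
  - destruct (constructive_indefinite_description _ H) as [[z1 Hz1] [t [Ht E]]]. simpl in *.
    rewrite (gam_dist d x0 Z gam gam_geodesic z s Hz Hs).
    assert (t = s) by (rewrite <- (gam_dist d x0 Z gam gam_geodesic z1 t Hz1 Ht), <- E;
                       apply (gam_dist d x0 Z gam gam_geodesic); auto).
    subst t. apply gpoint_eq; [apply branch_ov_sym|apply branch_ov_le_len|apply branch_ov_ultra|auto|].
    simpl. apply (overlap_ge d d_metric x0 Z gam gam_geodesic); auto.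
    apply (linked_of_eq d d_metric x0 Z gam gam_geodesic); auto; lra.
  - exfalso. apply H. exists (exist _ z Hz). exists s. auto.
Qed.

Lemma tree_dist_map z z' s s' : Z z -> Z z' -> 0 <= s <= d x0 z -> 0 <= s' <= d x0 z' ->
  tree_dist (tree_map (gam z s)) (tree_map (gam z' s')) =
    s + s' - 2 * Rmin (Rmin s s') (overlap d x0 gam z z').
Proof.
  intros Hz Hz' Hs Hs'. rewrite (tree_map_gam z Hz), (tree_map_gam z' Hz') by auto.
  unfold tree_dist, tree_point. rewrite (glued_dist _ _ _ branch_ov_sym _ branch_ov_ultra) by auto.
  reflexivity.
Qed.

Lemma tree_map_isometric_on_branch z s t : Z z -> 0 <= s <= d x0 z -> 0 <= t <= d x0 z ->
  tree_dist (tree_map (gam z s)) (tree_map (gam z t)) = d (gam z s) (gam z t).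
Proof.
  intros Hz Hs Ht. rewrite tree_dist_map, (overlap_diag d d_metric x0 Z gam gam_geodesic) by auto.
  destruct (gam_geodesic z Hz) as [_ [_ ->]]; auto.
  unfold Rmin, Rabs. repeat destruct Rle_dec; destruct Rcase_abs; lra.
Qed.

End Construction.

Theorem proposition5p1 (X : Type) (d : X -> X -> R) (delta Delta : R)
  (hQT : quasi_tree d) (hhyp : hyperbolic d delta) (hbot : bottleneck d Delta)
  (x0 : X) (Z : X -> Prop) (gam : X -> R -> X)
  (hgam : forall z, Z z -> is_geodesic d (gam z) x0 z) :
  let Y := fun y => exists z, Z z /\ on_geod d (gam z) x0 z y in
  exists (T : Type) (dT : T -> T -> R) (f : X -> T),
    R_tree dT /\
    (forall z, Z z -> forall s t, 0 <= s <= d x0 z -> 0 <= t <= d x0 z ->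
        dT (f (gam z s)) (f (gam z t)) = d (gam z s) (gam z t)) /\
    (forall x y, Y x -> Y y ->
        d x y - 2 * (Delta + 2 * delta) <= dT (f x) (f y) <= d x y).
Proof.
  intros Y.
  destruct hQT as [[d_metric d_geodesic] _].
  exists (glued (branch_len d x0 Z) (branch_ov d x0 Z gam)),
    (tree_dist d d_metric x0 Z gam hgam), (tree_map d d_metric x0 Z gam hgam).
  split; [apply tree_dist_R_tree|split].
  - intros z Hz s t Hs Ht. apply tree_map_isometric_on_branch; auto.
  - intros x y [z [Hz [s [Hs ->]]]] [z' [Hz' [s' [Hs' ->]]]].
    rewrite tree_dist_map by auto.
    apply (branch_dist_bounds d d_metric x0 Z gam hgam d_geodesic delta Delta hhyp hbot); auto.
Qed.
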